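(* Let $a\in(0,\infty)$ and $b\in\mathbb{Z}\cap[0,a+1)$. Then (i) $\exp\left(-\frac{b^3}{6a^2}\right)\le \dfrac{a^{\overline{b}}}{a^b\exp\left(\frac{b(b-1)}{2a}\right)}\le 1$; (ii) $1\le \dfrac{a^{\overline{b}}}{a^b\exp\left(\frac{b(b-1)}{2a}-\frac{b(b-1)(2b-1)}{12a^2}\right)}\le \exp\left(\frac{b^4}{12a^3}\right)$.
   Context: $a^{\overline{b}}=a(a+1)\cdots(a+b-1)$ denotes the rising factorial (with $a^{\overline{0}}=1$). *)

From Stdlib Require Import Reals.
Open Scope R_scope.

Fixpoint rising_fact (a : R) (b : nat) : R :=
  match b with
  | O => 1
  | S k => rising_fact a k * (a + INR k)
  end.

(* Write [a^(b) = a^b * prod_(k<b) (1 + k/a)] and compare each factor [1 + x], [x = k/a >= 0],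
   with exponentials via [exp (x - x^2/2) <= 1 + x <= exp x] and
   [1 + x <= exp (x - x^2/2 + x^3/3)].  Multiplying these out, the exponents telescope into
   the power sums [sum k = b(b-1)/2], [sum k^2 = b(b-1)(2b-1)/6] and [sum k^3 = b^2(b-1)^2/4],
   and for integral [b] the last two are at most [b^3/3] and [b^4/4]. *)
From Stdlib Require Import Reals Lra Psatz.
From Coquelicot Require Import Coquelicot.
Open Scope R_scope.

Lemma exp_le_exp_of_le (x y : R) : x <= y -> exp x <= exp y.
Proof. intros [hxy | ->]; [apply Rlt_le, exp_increasing |]; lra. Qed.

Lemma le_of_is_derive_nonneg (f df : R -> R) (x y : R) : x <= y ->
  (forall t, is_derive f t (df t)) -> (forall t, x <= t <= y -> 0 <= df t) -> f x <= f y.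
Proof.
  intros hxy hder hpos.
  destruct (MVT_gen f x y df) as [c [hc hmvt]].
  - intros t _; apply hder.
  - intros t _; apply continuity_pt_filterlim.
    apply (ex_derive_continuous (K := R_AbsRing) (V := R_NormedModule)).
    eexists; apply hder.
  - rewrite Rmin_left, Rmax_right in hc by lra.
    assert (0 <= df c * (y - x)) by (apply Rmult_le_pos; [apply hpos |]; lra).
    lra.
Qed.

Lemma exp_sub_sqr_half_le (x : R) : 0 <= x -> exp (x - x ^ 2 / 2) <= 1 + x.
Proof.
  intros hx.
  set (h := fun t => (1 + t) * exp (- (t - t ^ 2 / 2))).
  assert (hmono : h 0 <= h x).
  { apply (le_of_is_derive_nonneg h (fun t => t ^ 2 * exp (- (t - t ^ 2 / 2)))); auto.
    - intros t; unfold h; auto_derive; auto.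
      replace (t * (t * 1)) with (t ^ 2) by ring; unfold Rminus, Rdiv; field.
    - intros t _; apply Rmult_le_pos; [nra | apply Rlt_le, exp_pos]. }
  unfold h in hmono; rewrite Rplus_0_r, Rmult_1_l in hmono.
  replace (- (0 - 0 ^ 2 / 2)) with 0 in hmono by field; rewrite exp_0 in hmono.
  rewrite exp_Ropp in hmono.
  pose proof (exp_pos (x - x ^ 2 / 2)).
  apply Rmult_le_reg_r with (/ exp (x - x ^ 2 / 2)); [apply Rinv_0_lt_compat; lra |].
  rewrite Rinv_r by lra; lra.
Qed.

Lemma one_add_le_exp_cubic (x : R) : 0 <= x -> 1 + x <= exp (x - x ^ 2 / 2 + x ^ 3 / 3).
Proof.
  intros hx.
  set (h := fun t => - ((1 + t) * exp (- (t - t ^ 2 / 2 + t ^ 3 / 3)))).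
  assert (hmono : h 0 <= h x).
  { apply (le_of_is_derive_nonneg h (fun t => t ^ 3 * exp (- (t - t ^ 2 / 2 + t ^ 3 / 3))));
      auto.
    - intros t; unfold h; auto_derive; auto.
      replace (t * (t * (t * 1))) with (t ^ 3) by ring.
      replace (t * (t * 1)) with (t ^ 2) by ring; unfold Rminus, Rdiv; field.
    - intros t ht; apply Rmult_le_pos; [apply pow_le | apply Rlt_le, exp_pos]; lra. }
  unfold h in hmono; rewrite Rplus_0_r, Rmult_1_l in hmono.
  replace (- (0 - 0 ^ 2 / 2 + 0 ^ 3 / 3)) with 0 in hmono by field; rewrite exp_0 in hmono.
  rewrite exp_Ropp in hmono.
  pose proof (exp_pos (x - x ^ 2 / 2 + x ^ 3 / 3)).
  apply Rmult_le_reg_r with (/ exp (x - x ^ 2 / 2 + x ^ 3 / 3)); [apply Rinv_0_lt_compat; lra |].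
  rewrite Rinv_r by lra; lra.
Qed.

Section RisingFactTelescope.

Variables (a : R) (F : nat -> R).
Hypotheses (ha : 0 < a) (hF0 : F 0 = 0).

Lemma rising_fact_nonneg (b : nat) : 0 <= rising_fact a b.
Proof.
  induction b as [| b IH]; simpl; [lra |].
  pose proof (pos_INR b); apply Rmult_le_pos; lra.
Qed.

Lemma rising_fact_le_exp_telescope :
  (forall k, 1 + INR k / a <= exp (F (S k) - F k)) ->
  forall b, rising_fact a b <= a ^ b * exp (F b).
Proof.
  intros hstep b; induction b as [| b IH].
  - simpl; rewrite hF0, exp_0; lra.
  - simpl rising_fact; simpl pow.
    replace (F (S b)) with (F b + (F (S b) - F b)) by ring; rewrite exp_plus.
    replace (a * a ^ b * (exp (F b) * exp (F (S b) - F b)))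
      with (a ^ b * exp (F b) * (a * exp (F (S b) - F b))) by ring.
    replace (a + INR b) with (a * (1 + INR b / a)) by (field; lra).
    pose proof (rising_fact_nonneg b); pose proof (pos_INR b).
    apply Rmult_le_compat; auto.
    + assert (0 <= INR b / a) by (apply Rdiv_le_0_compat; lra); nra.
    + apply Rmult_le_compat_l; [lra | apply hstep].
Qed.

Lemma exp_telescope_le_rising_fact :
  (forall k, exp (F (S k) - F k) <= 1 + INR k / a) ->
  forall b, a ^ b * exp (F b) <= rising_fact a b.
Proof.
  intros hstep b; induction b as [| b IH].
  - simpl; rewrite hF0, exp_0; lra.
  - simpl rising_fact; simpl pow.
    replace (F (S b)) with (F b + (F (S b) - F b)) by ring; rewrite exp_plus.
    replace (a * a ^ b * (exp (F b) * exp (F (S b) - F b)))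
      with (a ^ b * exp (F b) * (a * exp (F (S b) - F b))) by ring.
    replace (a + INR b) with (a * (1 + INR b / a)) by (field; lra).
    pose proof (pow_lt a b ha); pose proof (exp_pos (F b)); pose proof (exp_pos (F (S b) - F b)).
    apply Rmult_le_compat; try (apply Rmult_le_pos; lra); auto.
    apply Rmult_le_compat_l; [lra | apply hstep].
Qed.

End RisingFactTelescope.

Lemma rising_fact_le_exp_first_order (a : R) (b : nat) : 0 < a ->
  rising_fact a b <= a ^ b * exp (INR b * (INR b - 1) / (2 * a)).
Proof.
  intros ha.
  apply (rising_fact_le_exp_telescope a (fun n => INR n * (INR n - 1) / (2 * a))); auto.
  - simpl; field; lra.
  - intros k; rewrite S_INR.
    replace ((INR k + 1) * (INR k + 1 - 1) / (2 * a) - INR k * (INR k - 1) / (2 * a))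
      with (INR k / a) by (field; lra).
    apply exp_ineq1_le.
Qed.

Lemma exp_second_order_le_rising_fact (a : R) (b : nat) : 0 < a ->
  a ^ b * exp (INR b * (INR b - 1) / (2 * a)
               - INR b * (INR b - 1) * (2 * INR b - 1) / (12 * a ^ 2))
  <= rising_fact a b.
Proof.
  intros ha.
  apply (exp_telescope_le_rising_fact a
    (fun n => INR n * (INR n - 1) / (2 * a)
              - INR n * (INR n - 1) * (2 * INR n - 1) / (12 * a ^ 2))); auto.
  - simpl; field; lra.
  - intros k; rewrite S_INR.
    match goal with |- exp ?e <= _ =>
      replace e with (INR k / a - (INR k / a) ^ 2 / 2) by (field; lra) end.
    apply exp_sub_sqr_half_le, Rdiv_le_0_compat; [apply pos_INR | lra].
Qed.

Lemma rising_fact_le_exp_third_order (a : R) (b : nat) : 0 < a ->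
  rising_fact a b
  <= a ^ b * exp (INR b * (INR b - 1) / (2 * a)
                  - INR b * (INR b - 1) * (2 * INR b - 1) / (12 * a ^ 2)
                  + INR b ^ 2 * (INR b - 1) ^ 2 / (12 * a ^ 3)).
Proof.
  intros ha.
  apply (rising_fact_le_exp_telescope a
    (fun n => INR n * (INR n - 1) / (2 * a)
              - INR n * (INR n - 1) * (2 * INR n - 1) / (12 * a ^ 2)
              + INR n ^ 2 * (INR n - 1) ^ 2 / (12 * a ^ 3))); auto.
  - simpl; field; lra.
  - intros k; rewrite S_INR.
    match goal with |- _ <= exp ?e =>
      replace e with (INR k / a - (INR k / a) ^ 2 / 2 + (INR k / a) ^ 3 / 3) by (field; lra) end.
    apply one_add_le_exp_cubic, Rdiv_le_0_compat; [apply pos_INR | lra].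
Qed.

Lemma INR_eq0_or_ge1 (n : nat) : INR n = 0 \/ 1 <= INR n.
Proof.
  destruct n as [| n]; [left; reflexivity | right].
  rewrite S_INR; pose proof (pos_INR n); lra.
Qed.

Lemma sum_squares_le_third_cube (n : nat) :
  INR n * (INR n - 1) * (2 * INR n - 1) <= 2 * INR n ^ 3.
Proof. destruct (INR_eq0_or_ge1 n) as [-> | h]; nra. Qed.

Lemma sum_cubes_le_quarter_fourth (n : nat) : INR n ^ 2 * (INR n - 1) ^ 2 <= INR n ^ 4.
Proof. destruct (INR_eq0_or_ge1 n) as [-> | h]; nra. Qed.

Theorem lemma2 (a : R) (b : nat) (ha : 0 < a) (hb : INR b < a + 1) :
  (exp (- (INR b ^ 3 / (6 * a ^ 2)))
     <= rising_fact a b / (a ^ b * exp (INR b * (INR b - 1) / (2 * a)))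
   /\ rising_fact a b / (a ^ b * exp (INR b * (INR b - 1) / (2 * a))) <= 1)
  /\
  (1 <= rising_fact a b /
          (a ^ b * exp (INR b * (INR b - 1) / (2 * a)
                        - INR b * (INR b - 1) * (2 * INR b - 1) / (12 * a ^ 2)))
   /\ rising_fact a b /
          (a ^ b * exp (INR b * (INR b - 1) / (2 * a)
                        - INR b * (INR b - 1) * (2 * INR b - 1) / (12 * a ^ 2)))
      <= exp (INR b ^ 4 / (12 * a ^ 3))).
Proof.
  pose proof (rising_fact_le_exp_first_order a b ha) as hup1.
  pose proof (exp_second_order_le_rising_fact a b ha) as hlow.
  pose proof (rising_fact_le_exp_third_order a b ha) as hup3.
  pose proof (sum_squares_le_third_cube b) as hsq.
  pose proof (sum_cubes_le_quarter_fourth b) as hcube.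
  set (n := INR b) in *.
  set (F1 := n * (n - 1) / (2 * a)) in *.
  set (F2 := n * (n - 1) * (2 * n - 1) / (12 * a ^ 2)) in *.
  set (F3 := n ^ 2 * (n - 1) ^ 2 / (12 * a ^ 3)) in *.
  assert (hF2 : F2 <= n ^ 3 / (6 * a ^ 2)).
  { unfold F2; apply Rmult_le_reg_r with (12 * a ^ 2); [nra |].
    field_simplify; [lra | nra | nra]. }
  assert (hF3 : F3 <= n ^ 4 / (12 * a ^ 3)).
  { unfold F3; apply Rmult_le_compat_r; [| exact hcube].
    apply Rlt_le, Rinv_0_lt_compat; pose proof (pow_lt a 3 ha); lra. }
  pose proof (pow_lt a b ha); pose proof (exp_pos F1); pose proof (exp_pos (F1 - F2)).
  split; split.
  - apply Rle_div_r; [nra |].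
    replace (exp (- (n ^ 3 / (6 * a ^ 2))) * (a ^ b * exp F1))
      with (a ^ b * exp (F1 - n ^ 3 / (6 * a ^ 2))) by (unfold Rminus; rewrite exp_plus; ring).
    eapply Rle_trans; [| exact hlow].
    apply Rmult_le_compat_l; [lra | apply exp_le_exp_of_le; lra].
  - apply Rle_div_l; [nra | lra].
  - apply Rle_div_r; [nra | lra].
  - apply Rle_div_l; [nra |].
    eapply Rle_trans; [exact hup3 |].
    replace (exp (n ^ 4 / (12 * a ^ 3)) * (a ^ b * exp (F1 - F2)))
      with (a ^ b * exp (F1 - F2 + n ^ 4 / (12 * a ^ 3))) by (rewrite exp_plus; ring).
    apply Rmult_le_compat_l; [lra | apply exp_le_exp_of_le; lra].
Qed.
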